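(* Let $a_1,\dots,a_n$ be real numbers with $n=k\ell$ odd (for positive integers $k,\ell$). Let $\Pi$ be the set of all partitions $\pi=\{S_1,\dots,S_\ell\}$ of $[n]$ into $\ell$ blocks each of size $k$. Then \[ \operatorname{median}_{\pi\in\Pi}\ \operatorname{median}_{b\in[\ell]}\ \operatorname{median}_{i\in S_b} a_i=\operatorname{median}_{i\in[n]} a_i . \]
   Context: The median of a finite list of odd length is its middle element after sorting; the median of a list of even length (which may occur for the outer median over $\Pi$) is the average of its two middle elements. The outer median is taken over the list of values, one for each partition $\pi\in\Pi$. *)

From HB Require Import structures.
From mathcomp Require Import all_boot all_order all_algebra.
Set Implicit Arguments. Unset Strict Implicit. Unset Printing Implicit Defensive.
Import Order.TTheory GRing.Theory Num.Theory.
Local Open Scope ring_scope.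

(* Median of a finite list: middle element of the sorted list for odd length,
   average of the two middle elements for even length (0 for the empty list,
   a case that never arises in the statement). *)
Definition median (R : realFieldType) (s : seq R) : R :=
  let t := sort <=%R s in
  let m := size t in
  if odd m then nth 0 t m./2
  else (nth 0 t m./2.-1 + nth 0 t m./2) / 2%:R.

Definition is_equipartition (n k l : nat) (P : {set {set 'I_n}}) : bool :=
  [&& partition P [set: 'I_n], (#|P| == l)%N & [forall B in P, (#|B| == k)%N]].

Definition equipartitions (n k l : nat) : seq {set {set 'I_n}} :=
  enum (is_equipartition k l).

Definition med_med (R : realFieldType) (n : nat) (a : 'I_n -> R)
    (P : {set {set 'I_n}}) : R :=
  median [seq median [seq a i | i <- enum (pred_of_set B)] | B : {set 'I_n} <- enum (pred_of_set P)].

From HB Require Import structures.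
From mathcomp Require Import all_boot all_order all_algebra all_fingroup zify lra.
Set Implicit Arguments. Unset Strict Implicit. Unset Printing Implicit Defensive.
Import Order.TTheory GRing.Theory Num.Theory.
Local Open Scope ring_scope.

(* Medians commute with nondecreasing maps, and relabelling [n] by a permutation
   permutes the set of equipartitions.  Sorting a therefore reduces the theorem
   to the rank vector c i = i, whose nested medians a is a monotone image of.
   For c, the reversal i |-> n-1-i permutes the equipartitions and sends each
   nested median x to n-1-x, so as many of them lie strictly below (n-1)/2 as
   strictly above, while the partition into consecutive blocks attains (n-1)/2.
   Hence fewer than half of the values lie strictly on either side of (n-1)/2,
   which characterises the median (for either parity of |Pi|). *)

Lemma sub_in_count (T : eqType) (a1 a2 : pred T) (s : seq T) :
  {in s, subpred a1 a2} -> (count a1 s <= count a2 s)%N.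
Proof.
elim: s => //= x s IHs sub12; rewrite leq_add ?IHs //; last first.
  by move=> y ys; apply: sub12; rewrite inE ys orbT.
by case: (a1 x) (sub12 x (mem_head x s)) => // ->.
Qed.

Section Median.
Variable R : realFieldType.
Implicit Types (s t : seq R) (x : R).

Lemma perm_median s1 s2 : perm_eq s1 s2 -> median s1 = median s2.
Proof. by move=> s12; rewrite /median (perm_sortP le_total le_trans le_anti _ _ s12). Qed.

Lemma sorted_nth_eq t x j : sorted <=%R t ->
  (count (< x) t <= j)%N -> (j < size t - count (> x) t)%N -> nth 0 t j = x.
Proof.
move=> st lo hi; have jt : (j < size t)%N by lia.
have le_nth i i' : (i <= i')%N -> (i' < size t)%N -> nth 0 t i <= nth 0 t i'.
  by move=> ii' i't; apply: le_sorted_leq_nth; rewrite ?inE // (leq_ltn_trans ii').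
case: (ltgtP (nth 0 t j) x) => // [tj_lt_x | x_lt_tj].
- suff: (j.+1 <= count (< x) t)%N by lia.
  have : all (< x) (take j.+1 t).
    apply/(all_nthP 0) => i; rewrite size_takel // => ij.
    by rewrite nth_take //= (le_lt_trans _ tj_lt_x) // le_nth.
  rewrite all_count size_takel // => /eqP count_take.
  by rewrite -(cat_take_drop j.+1 t) count_cat count_take leq_addr.
- suff: (size t - j <= count (> x) t)%N by lia.
  have : all (> x) (drop j t).
    apply/(all_nthP 0) => i; rewrite size_drop => ij.
    by rewrite nth_drop /= (lt_le_trans x_lt_tj) // le_nth ?leq_addr // -ltn_subRL.
  rewrite all_count size_drop => /eqP count_drop.
  by rewrite -[X in count _ X](cat_take_drop j t) count_cat count_drop leq_addl.
Qed.

Lemma median_eq_count s x :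
  (2 * count (< x) s < size s)%N -> (2 * count (> x) s < size s)%N ->
  median s = x.
Proof.
rewrite /median; have st : sorted <=%R (sort <=%R s) := sort_sorted le_total s.
have count_sort := seq.permP (permEl (perm_sort <=%R s)).
rewrite -(size_sort <=%R s) -!count_sort; move: (sort _ s) st => t st lo hi.
(* Restated so that every [size t] and [count] carries the same implicit type,
   which lia needs to treat them as the same atom. *)
have {}lo : (2 * count (< x) t < size t)%N := lo.
have {}hi : (2 * count (> x) t < size t)%N := hi.
have := odd_double_half (size t); rewrite -muln2.
case: ifP => odd_t /= size_t.
  by apply: sorted_nth_eq => //; lia.
rewrite (@sorted_nth_eq t x (size t)./2.-1) ?(@sorted_nth_eq t x (size t)./2) //; try lia.
lra.
Qed.

Lemma sorted_count_lt_nth t j : sorted <=%R t -> (j < size t)%N ->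
  (count (< nth 0%R t j) t <= j)%N.
Proof.
move=> st jt; set x := nth 0 t j.
have : all (>= x) (drop j t).
  apply/(all_nthP 0) => i; rewrite size_drop => ij.
  by rewrite nth_drop /= le_sorted_leq_nth ?inE ?leq_addr // -ltn_subRL.
move=> drop_ge; rewrite -[X in count _ X](cat_take_drop j t) count_cat.
rewrite (@eq_in_count _ _ pred0 (drop j t)) ?count_pred0 ?addn0; last first.
  by move=> y /(allP drop_ge) /= xy; rewrite ltNge xy.
by rewrite (leq_trans (count_size _ _)) // size_takel // ltnW.
Qed.

Lemma sorted_count_gt_nth t j : sorted <=%R t -> (j < size t)%N ->
  (count (> nth 0%R t j) t <= size t - j.+1)%N.
Proof.
move=> st jt; set x := nth 0 t j.
have : all (<= x) (take j.+1 t).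
  apply/(all_nthP 0) => i; rewrite size_takel // => ij.
  by rewrite nth_take //= le_sorted_leq_nth ?inE // (leq_trans ij jt).
move=> take_le; rewrite -[X in count _ X](cat_take_drop j.+1 t) count_cat.
rewrite (@eq_in_count _ _ pred0 (take _ _)) ?count_pred0 /=; last first.
  by move=> y /(allP take_le) /= yx; rewrite ltNge yx.
by rewrite (leq_trans (count_size _ _)) // size_drop.
Qed.

Lemma median_count s : odd (size s) ->
  (2 * count (< median s) s < size s)%N /\ (2 * count (> median s) s < size s)%N.
Proof.
rewrite /median size_sort => odd_s; rewrite odd_s.
have st : sorted <=%R (sort <=%R s) := sort_sorted le_total s.
have count_sort := seq.permP (permEl (perm_sort <=%R s)).
rewrite -(size_sort <=%R s) -!count_sort; rewrite -(size_sort <=%R s) in odd_s.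
move: (sort _ s) st odd_s => t st odd_t.
suff : (2 * count (< nth 0%R t (size t)./2) t < size t)%N /\
  (2 * count (> nth 0%R t (size t)./2) t < size t)%N by [].
have {}odd_t : odd (size t) := odd_t.
have := odd_double_half (size t); rewrite odd_t -muln2 /= => size_t.
have ht : ((size t)./2 < size t)%N by lia.
have := sorted_count_lt_nth st ht; have := sorted_count_gt_nth st ht.
set lt_med := count (< _) t; set gt_med := count (> _) t.
split; lia.
Qed.

Lemma mem_median s : odd (size s) -> median s \in s.
Proof.
rewrite /median size_sort => odd_s; rewrite odd_s -(mem_sort <=%R) mem_nth //.
by rewrite size_sort; have := odd_double_half (size s); rewrite odd_s -muln2 /=; lia.
Qed.

Lemma median_map_homo s (f : R -> R) : odd (size s) ->
  {in s &, {homo f : x y / x <= y}} -> median (map f s) = f (median s).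
Proof.
move=> odd_s f_homo; have [lt_med gt_med] := median_count odd_s.
have med_s := mem_median odd_s.
apply: median_eq_count; rewrite size_map count_map.
  apply: leq_ltn_trans lt_med; rewrite leq_mul2l sub_in_count ?orbT // => y ys /=.
  by apply: contraTT; rewrite -!leNgt; apply: f_homo.
apply: leq_ltn_trans gt_med; rewrite leq_mul2l sub_in_count ?orbT // => y ys /=.
by apply: contraTT; rewrite -!leNgt; apply: f_homo.
Qed.

Lemma median_map_nhomo s (f : R -> R) : odd (size s) ->
  {in s &, {homo f : x y / x <= y >-> y <= x}} -> median (map f s) = f (median s).
Proof.
move=> odd_s f_nhomo; have [lt_med gt_med] := median_count odd_s.
have med_s := mem_median odd_s.
apply: median_eq_count; rewrite size_map count_map.
  apply: leq_ltn_trans gt_med; rewrite leq_mul2l sub_in_count ?orbT // => y ys /=.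
  by apply: contraTT; rewrite -!leNgt; apply: f_nhomo.
apply: leq_ltn_trans lt_med; rewrite leq_mul2l sub_in_count ?orbT // => y ys /=.
by apply: contraTT; rewrite -!leNgt; apply: f_nhomo.
Qed.

Lemma median_iota m : odd m -> median [seq (i%:R : R) | i <- iota 0 m] = (m./2)%:R.
Proof.
have sorted_m : sorted <=%R [seq (i%:R : R) | i <- iota 0 m].
  by rewrite sorted_map (sub_sorted _ (iota_sorted 0 m)) // => i j; rewrite /= ler_nat.
move=> odd_m; rewrite /median (sorted_sort le_trans sorted_m).
have := odd_double_half m; rewrite odd_m -muln2 /= => m_eq.
by rewrite size_map size_iota odd_m (nth_map 0%N) ?nth_iota ?size_iota //; lia.
Qed.

Lemma count_lt_half s x :
  count (< x) s = count (> x) s -> x \in s -> (2 * count (< x) s < size s)%N.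
Proof.
move=> balanced xs; have := count_predC (< x) s.
have -> : count (predC (< x)) s = (count (> x) s + count (pred1 x) s)%N.
  rewrite -count_predUI (@eq_count _ (predI _ _) pred0) ?count_pred0 ?addn0.
    by apply: eq_count => y /=; rewrite -leNgt le_eqVlt eq_sym orbC.
  by move=> y /=; case: ltgtP.
have : (0 < count (pred1 x) s)%N by rewrite -has_count has_pred1.
rewrite -balanced; set lt_x := count (< x) s; set eq_x := count _ s; set S := size s; lia.
Qed.
End Median.

Lemma sorting_perm (d : Order.disp_t) (T : orderType d) n (a : 'I_n -> T) :
  exists rho : {perm 'I_n}, forall i j : 'I_n, (i <= j)%N -> (a (rho i) <= a (rho j))%O.
Proof.
case: n a => [|n] a; first by exists 1%g => -[].
pose s := sort (relpre a <=%O) (enum 'I_n.+1).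
have size_s : size s = n.+1 by rewrite size_sort size_enum_ord.
have uniq_s : uniq s by rewrite sort_uniq enum_uniq.
have sorted_s : sorted (relpre a <=%O) s by apply: sort_sorted => i j; apply: le_total.
have nth_inj : injective (fun j : 'I_n.+1 => nth ord0 s j).
  by move=> i j /eqP; rewrite nth_uniq ?size_s // => /eqP /val_inj.
exists (perm nth_inj) => i j ij; rewrite !permE.
apply: (sorted_leq_nth (leT := relpre a <=%O)) => //; rewrite ?inE ?size_s //.
  by move=> y x z /= xy; apply: le_trans.
by move=> x; apply: lexx.
Qed.

Lemma factor_inj (R : realFieldType) (T : finType) (w u : T -> R) :
  injective w -> exists f : R -> R, forall i, f (w i) = u i.
Proof.
move=> w_inj; exists (fun x => if [pick i | w i == x] is Some i then u i else 0) => i.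
by case: pickP => [j /eqP /w_inj -> // | /(_ i)]; rewrite eqxx.
Qed.

Lemma perm_enum_imset (T1 T2 : finType) (f : T1 -> T2) (A : {pred T1}) :
  injective f -> perm_eq (enum [set f x | x in A]) (map f (enum A)).
Proof.
move=> f_inj; apply: uniq_perm; rewrite ?(map_inj_uniq f_inj) ?enum_uniq //.
move=> y; rewrite mem_enum; apply/imsetP/mapP => -[x xA ->];
  by exists x; rewrite // ?mem_enum // -mem_enum.
Qed.

Section Relabel.
Variable n : nat.
Implicit Types (s : {perm 'I_n}) (P : {set {set 'I_n}}).

Definition relabel s P : {set {set 'I_n}} := ('P^*^*)%act P s.

Lemma relabelE s P : relabel s P = [set [set s i | i in B] | B : {set 'I_n} in P].
Proof.
rewrite /relabel /= setactE; apply: eq_imset => B /=; rewrite setactE; by apply: eq_imset => i.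
Qed.

Lemma mem_equipartitions k l P :
  (P \in equipartitions n k l) = is_equipartition k l P.
Proof. by rewrite mem_enum. Qed.

Lemma relabel_equipartition k l s P :
  is_equipartition k l (relabel s P) = is_equipartition k l P.
Proof.
have s_inj := @perm_inj _ s.
have im_setT : [set s i | i in [set: 'I_n]] = [set: 'I_n].
  by apply/setP => i; rewrite inE; apply/imsetP; exists (s^-1 i)%g; rewrite ?permKV.
rewrite /is_equipartition relabelE -{1}im_setT imset_partition //.
rewrite card_imset; last exact: imset_inj.
congr [&& _, _ & _]; apply/forall_inP/forall_inP => card_k B.
  by move=> BP; rewrite -(card_imset _ s_inj) card_k // imset_f.
by case/imsetP => B' B'P ->; rewrite card_imset // card_k.
Qed.

Lemma relabelK s : cancel (relabel s) (relabel s^-1).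
Proof. exact: actK. Qed.

Lemma relabelKV s : cancel (relabel s^-1) (relabel s).
Proof. exact: actKV. Qed.

Lemma perm_equipartitions_relabel k l s :
  perm_eq (map (relabel s) (equipartitions n k l)) (equipartitions n k l).
Proof.
have uniq_L : uniq (equipartitions n k l) := enum_uniq _.
apply: uniq_perm; rewrite ?(map_inj_uniq (can_inj (relabelK s))) //.
move=> Q; apply/mapP/idP => [[P PL ->] | QL].
  by rewrite mem_equipartitions relabel_equipartition -mem_equipartitions.
by exists (relabel s^-1 Q); rewrite ?relabelKV // mem_equipartitions relabel_equipartition
  -mem_equipartitions.
Qed.

Lemma med_med_relabel (R : realFieldType) s (w : 'I_n -> R) P :
  med_med w (relabel s P) = med_med (w \o s) P.
Proof.
have s_inj := @perm_inj _ s; rewrite /med_med relabelE.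
rewrite (perm_median (perm_map _ (perm_enum_imset _ (imset_inj s_inj)))) -map_comp.
congr median; apply: eq_map => B /=; apply: perm_median.
by rewrite (map_comp w s); apply: perm_map; apply: perm_enum_imset.
Qed.

Lemma count_med_med_relabel (R : realFieldType) k l (p : pred R) s (w : 'I_n -> R) :
  count (fun P => p (med_med w P)) (equipartitions n k l) =
  count (fun P => p (med_med (w \o s) P)) (equipartitions n k l).
Proof.
rewrite -(seq.permP (perm_equipartitions_relabel k l s)) count_map.
by apply: eq_count => P /=; rewrite med_med_relabel.
Qed.

End Relabel.

Lemma eq_med_med (R : realFieldType) n (w1 w2 : 'I_n -> R) P :
  w1 =1 w2 -> med_med w1 P = med_med w2 P.
Proof. by move=> w12; rewrite /med_med; congr median; apply: eq_map => B; rewrite (eq_map w12). Qed.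

Section NestedMedian.
Variables (R : realFieldType) (n k l : nat).
Hypotheses (odd_k : odd k) (odd_l : odd l).
Implicit Types (w : 'I_n -> R) (P : {set {set 'I_n}}).

Lemma odd_size_block w P B : is_equipartition k l P -> B \in P ->
  odd (size [seq w i | i <- enum B]).
Proof. by case/and3P=> _ _ /forall_inP card_k BP; rewrite size_map -cardE (eqP (card_k B BP)). Qed.

Lemma median_block_codom w P B : is_equipartition k l P -> B \in P ->
  median [seq w i | i <- enum B] \in codom w.
Proof.
move=> equiP BP; have /mapP [i _ ->] := mem_median (odd_size_block w equiP BP).
exact: codom_f.
Qed.

Lemma odd_size_blocks w P : is_equipartition k l P ->
  odd (size [seq median [seq w i | i <- enum B] | B : {set 'I_n} <- enum P]).
Proof. by case/and3P=> _ /eqP card_l _; rewrite size_map -cardE card_l. Qed.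

Lemma med_med_codom w P : is_equipartition k l P -> med_med w P \in codom w.
Proof.
rewrite /med_med => equiP; have /mapP [B BP ->] := mem_median (odd_size_blocks w equiP).
by apply: (median_block_codom _ equiP); rewrite -mem_enum.
Qed.

Lemma med_med_comp w (f : R -> R) P : is_equipartition k l P ->
  (forall s : seq R, {subset s <= codom w} -> odd (size s) -> median (map f s) = f (median s)) ->
  med_med (f \o w) P = f (med_med w P).
Proof.
move=> equiP f_median; rewrite /med_med.
have -> : [seq median [seq (f \o w) i | i <- enum B] | B : {set 'I_n} <- enum P] =
          map f [seq median [seq w i | i <- enum B] | B : {set 'I_n} <- enum P].
  rewrite -map_comp; apply/eq_in_map => B; rewrite mem_enum => BP /=.
  rewrite map_comp; apply: f_median; last exact: odd_size_block equiP BP.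
  by move=> y /mapP [i _ ->]; apply: codom_f.
apply: f_median; last exact: odd_size_blocks equiP.
by move=> y /mapP [B BP ->]; apply: (median_block_codom _ equiP); rewrite -mem_enum.
Qed.

End NestedMedian.

Section Blocks.
Variables (k l : nat).
Hypothesis k_gt0 : (0 < k)%N.
Local Notation n := (k * l)%N.

Definition block (q : nat) : {set 'I_n} := [set i : 'I_n | (i %/ k == q)%N].

Definition blocks : {set {set 'I_n}} := [set block q | q : 'I_l].

Lemma val_enum_block q : (q < l)%N -> perm_eq (map val (enum (block q))) (iota (q * k) k).
Proof.
move=> ql; apply: uniq_perm; rewrite ?iota_uniq ?(map_inj_uniq val_inj) ?enum_uniq //.
move=> x; rewrite mem_iota; apply/mapP/idP => [[i] | /andP [lo hi]].
  rewrite mem_enum inE => /eqP <- ->.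
  by rewrite leq_divM -mulSnr ltn_ceil.
have xn : (x < n)%N by rewrite (leq_trans hi) // -mulSnr mulnC leq_mul2l ql orbT.
exists (Ordinal xn); rewrite // mem_enum inE /= eqn_leq leq_divRL // lo andbT.
by rewrite -ltnS ltn_divLR // mulSnr.
Qed.

Lemma card_block q : (q < l)%N -> #|block q| = k.
Proof. by move=> ql; rewrite cardE -(size_map val) (perm_size (val_enum_block ql)) size_iota. Qed.

Lemma blocks_partition : partition blocks (cover blocks) /\ injective (fun q : 'I_l => block q).
Proof.
have [] := @indexed_partition _ _ predT (fun q : 'I_l => block q).
- move=> q q' _ _ q'q; rewrite -setI_eq0; apply/eqP/setP => i.
  rewrite !inE; apply/negbTE; apply: contra q'q => /andP [/eqP iq /eqP iq'].
  by apply/eqP/val_inj; rewrite /= -iq -iq'.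
- by move=> q _; rewrite -card_gt0 card_block.
by move=> partP injP; split => // q q'; apply: injP.
Qed.

Lemma cover_blocks : cover blocks = [set: 'I_n].
Proof.
apply/setP => i; rewrite inE cover_imset; apply/bigcupP.
have il : (i %/ k < l)%N by rewrite ltn_divLR // (leq_trans (ltn_ord i)) // mulnC.
by exists (Ordinal il); rewrite ?inE.
Qed.

Lemma blocks_equipartition : is_equipartition k l blocks.
Proof.
have [partP block_inj] := blocks_partition.
apply/and3P; split; first by rewrite -cover_blocks.
  by rewrite card_imset // card_ord.
by apply/forall_inP => B /imsetP [q _ ->]; rewrite card_block.
Qed.

End Blocks.

Lemma half_muln_odd k l : odd k -> odd l -> ((k * l)./2 = l./2 * k + k./2)%N.
Proof.
move=> odd_k odd_l; have := odd_double_half k; have := odd_double_half l.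
rewrite odd_k odd_l -!muln2 /= => def_l def_k.
have -> : (k * l = true + (l./2 * k + k./2).*2)%N by rewrite -muln2 /=; nia.
by rewrite half_bit_double.
Qed.

Lemma perm_map_enum (T : finType) (s : {perm T}) : perm_eq (map s (enum T)) (enum T).
Proof.
apply: uniq_perm; rewrite ?(map_inj_uniq (@perm_inj _ s)) ?enum_uniq // => x.
by rewrite mem_enum; apply/mapP; exists (s^-1 x)%g; rewrite ?mem_enum ?permKV.
Qed.

Definition natr_ord (R : realFieldType) n (i : 'I_n) : R := (i : nat)%:R.

Lemma natr_ord_inj (R : realFieldType) n : injective (@natr_ord R n).
Proof. by move=> i j /eqP; rewrite eqr_nat => /eqP /val_inj. Qed.

Lemma median_natr_ord (R : realFieldType) n : odd n ->
  median [seq natr_ord R i | i <- enum 'I_n] = (n./2)%:R.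
Proof. by move=> odd_n; rewrite (map_comp (fun j : nat => j%:R) val) val_enum_ord median_iota. Qed.

Lemma sorted_factorization (R : realFieldType) n (a : 'I_n -> R) :
  exists (rho : {perm 'I_n}) (f : R -> R), (forall i, a (rho i) = f (natr_ord R i)) /\
    {in codom (@natr_ord R n) &, {homo f : x y / x <= y}}.
Proof.
have [rho a_rho_homo] := sorting_perm a.
have [f fE] := factor_inj (a \o rho) (@natr_ord_inj R n).
exists rho, f; split=> [i | _ _ /codomP [i ->] /codomP [j ->]]; rewrite !fE //.
by rewrite ler_nat; apply: a_rho_homo.
Qed.

Definition rev_perm n : {perm 'I_n} := perm (@rev_ord_inj n).

Section Ranks.
Variables (R : realFieldType) (k l : nat).
Hypotheses (odd_k : odd k) (odd_l : odd l).
Local Notation n := (k * l)%N.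
Local Notation c := (@natr_ord R n).
Local Notation cm := ((n./2)%:R : R).

Lemma median_block q : (q < l)%N -> median [seq c i | i <- enum (block k l q)] = (q * k + k./2)%:R.
Proof.
have k_gt0 := odd_gt0 odd_k; move=> ql.
rewrite (map_comp (fun j : nat => j%:R) val) (perm_median (perm_map _ (val_enum_block k_gt0 ql))).
rewrite -[(q * k)%N]addn0 iotaDl -map_comp.
rewrite (eq_map (g := (fun x => (q * k)%:R + x) \o (fun j : nat => (j%:R : R)))); last first.
  by move=> j /=; rewrite natrD.
rewrite map_comp median_map_homo ?size_map ?size_iota //; last by move=> x y _ _; rewrite lerD2l.
by rewrite median_iota // natrD addn0.
Qed.

Lemma med_med_blocks : med_med c (blocks k l) = cm.
Proof.
have [_ block_inj] := blocks_partition l (odd_gt0 odd_k).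
rewrite /med_med (perm_median (perm_map _ (perm_enum_imset _ block_inj))) -map_comp.
rewrite (eq_map (g := (fun x => x * k%:R + (k./2)%:R) \o (fun q : 'I_l => (q : nat)%:R)));
  last first.
  by move=> q /=; rewrite median_block // natrD natrM.
rewrite map_comp (map_comp (fun j : nat => j%:R) val) val_enum_ord.
rewrite median_map_homo ?size_map ?size_iota //.
  by rewrite median_iota // -natrM -natrD half_muln_odd.
by move=> x y _ _ xy; rewrite lerD2r ler_wpM2r.
Qed.

Lemma med_med_rev P : is_equipartition k l P ->
  med_med (c \o rev_perm n) P = (n.-1)%:R - med_med c P.
Proof.
move=> equiP; have -> : med_med (c \o rev_perm n) P = med_med ((fun x => (n.-1)%:R - x) \o c) P.
  apply: eq_med_med => i /=; rewrite permE /natr_ord /= -natrB; last by have := ltn_ord i; lia.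
  by congr (_%:R); have := ltn_ord i; lia.
apply: (med_med_comp odd_k odd_l) => // s _ odd_s.
by apply: median_map_nhomo => // x y _ _; rewrite lerD2l lerN2.
Qed.

Local Notation L := (equipartitions n k l).

Lemma count_med_med_balanced :
  count (fun P => med_med c P < cm) L = count (fun P => cm < med_med c P) L.
Proof.
have cmE : (n.-1)%:R = cm + cm.
  rewrite -natrD; congr (_%:R); have := odd_double_half n; rewrite oddM odd_k odd_l /=; lia.
rewrite (count_med_med_relabel _ _ _ (rev_perm n)); apply: eq_in_count => P.
by rewrite mem_equipartitions => equiP /=; rewrite med_med_rev // cmE; apply/idP/idP; lra.
Qed.

Lemma count_med_med_lt_half : (2 * count (fun P => (med_med c P < cm)%R) L < size L)%N.
Proof.
have := @count_lt_half R [seq med_med c P | P <- L] cm; rewrite !count_map size_map; apply.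
  exact: count_med_med_balanced.
apply/mapP; exists (blocks k l); rewrite ?med_med_blocks //.
by rewrite mem_equipartitions blocks_equipartition // odd_gt0.
Qed.

Lemma count_med_med_gt_half : (2 * count (fun P => (cm < med_med c P)%R) L < size L)%N.
Proof. by rewrite -count_med_med_balanced count_med_med_lt_half. Qed.

End Ranks.

Theorem lemma6p4 (R : realFieldType) (n k l : nat) (hk : (0 < k)%N) (hl : (0 < l)%N)
    (hn : n = (k * l)%N) (hodd : odd n) (a : 'I_n -> R) :
  median [seq med_med a P | P <- equipartitions n k l]
  = median [seq a i | i <- enum 'I_n].
Proof.
subst n; have /andP [odd_k odd_l] : odd k && odd l by rewrite -oddM.
set c := @natr_ord R (k * l); set cm : R := ((k * l)./2)%:R.
have [rho [f [a_rhoE f_homo]]] := sorted_factorization a.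
have f_median (s : seq R) : {subset s <= codom c} -> odd (size s) ->
    median (map f s) = f (median s).
  by move=> sc odd_s; apply: median_map_homo => // x y /sc xc /sc yc; apply: f_homo.
have odd_c : odd (size [seq c i | i <- enum 'I_(k * l)]).
  by rewrite size_map size_enum_ord hodd.
have codom_cm : cm \in codom c by rewrite /cm -(median_natr_ord R hodd); apply: mem_median.
have med_a : median [seq a i | i <- enum 'I_(k * l)] = f cm.
  rewrite -(perm_median (perm_map a (perm_map_enum rho))) -map_comp (eq_map a_rhoE).
  by rewrite map_comp f_median ?median_natr_ord.
have med_med_a P : P \in equipartitions _ k l ->
    med_med (a \o rho) P = f (med_med c P) /\ med_med c P \in codom c.
  rewrite mem_equipartitions => equiP; rewrite -(med_med_comp odd_k odd_l equiP) //.
  by rewrite (med_med_codom odd_k odd_l) //; split=> //; apply: eq_med_med.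
apply: median_eq_count; rewrite size_map !count_map med_a.
  rewrite (count_med_med_relabel _ _ _ rho).
  apply: leq_ltn_trans (count_med_med_lt_half R odd_k odd_l).
  rewrite leq_mul2l sub_in_count ?orbT // => P /med_med_a [-> mc] /=.
  by apply: contraTT; rewrite -!leNgt; apply: f_homo.
rewrite (count_med_med_relabel _ _ _ rho).
apply: leq_ltn_trans (count_med_med_gt_half R odd_k odd_l).
rewrite leq_mul2l sub_in_count ?orbT // => P /med_med_a [-> mc] /=.
by apply: contraTT; rewrite -!leNgt; apply: f_homo.
Qed.
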